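(* Let $G$ be a torsion abelian group (with the discrete topology), let $\widehat G$ be its Pontryagin dual (a totally disconnected, i.e. $0$-dimensional, compact abelian group), and let $\varphi\colon G\to G$ be an endomorphism with dual endomorphism $\widehat\varphi\colon\widehat G\to\widehat G$, $\widehat\varphi(\chi)=\chi\circ\varphi$. Then $\varphi$ is (algebraically) positively expansive if and only if $\widehat\varphi$ is topologically positively expansive. Moreover, if $\varphi$ is an automorphism, then $\varphi$ is (algebraically) expansive if and only if $\widehat\varphi$ is topologically expansive.
   Context: All groups are abelian; $\mathbb N=\{0,1,2,\dots\}$. An endomorphism $\varphi\colon G\to G$ is (algebraically) positively expansive if there is a finite subgroup $S\leq G$ such that for every finite subgroup $F\leq G$ there is $n\in\mathbb N$ with $F\subseteq\sum_{k=0}^n\varphi^kS$. An automorphism $\varphi$ is (algebraically) expansive if there is a finite subgroup $S\leq G$ such that for every finite subgroup $F\leq G$ there is $n\in\mathbb N$ with $F\subseteq\sum_{|k|\leq n}\varphi^kS$. A continuous endomorphism $\psi$ of a compact group $K$ with identity $e$ is topologically positively expansive if there is a neighborhood $U$ of $e$ with $\bigcap_{k\in\mathbb N}\psi^{-k}(U)=\{e\}$; a continuous automorphism $\psi$ is topologically expansive if there is a neighborhood $U$ of $e$ with $\bigcap_{k\in\mathbb Z}\psi^{-k}(U)=\{e\}$. *)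

From mathcomp Require Import all_boot all_algebra complex reals.
Set Implicit Arguments. Unset Strict Implicit. Unset Printing Implicit Defensive.
Import GRing.Theory Num.Theory.
Local Open Scope ring_scope.

Definition torsion (G : zmodType) : Prop :=
  forall x : G, exists2 n : nat, (0 < n)%N & x *+ n = 0.

Definition finite_subgroup (G : zmodType) (S : G -> Prop) : Prop :=
  [/\ S 0, (forall x y, S x -> S y -> S (x - y))
    & exists s : seq G, forall x, S x <-> x \in s].

Definition in_pos_trajectory (G : zmodType) (phi : G -> G) (S : G -> Prop)
    (n : nat) (x : G) : Prop :=
  exists s : nat -> G, (forall k, (k <= n)%N -> S (s k)) /\
    x = \sum_(k < n.+1) iter k phi (s k).

(* x \in sum_{|k|<=n} phi^k S, phi^{-1} = phiinv *)
Definition in_trajectory (G : zmodType) (phi phiinv : G -> G) (S : G -> Prop)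
    (n : nat) (x : G) : Prop :=
  exists s t : nat -> G, (forall k, (k <= n)%N -> S (s k) /\ S (t k)) /\
    x = \sum_(k < n.+1) iter k phi (s k)
        + \sum_(1 <= k < n.+1) iter k phiinv (t k).

Definition alg_pos_expansive (G : zmodType) (phi : G -> G) : Prop :=
  exists2 S : G -> Prop, finite_subgroup S &
    forall F : G -> Prop, finite_subgroup F ->
      exists n : nat, forall x, F x -> in_pos_trajectory phi S n x.

Definition alg_expansive (G : zmodType) (phi phiinv : G -> G) : Prop :=
  exists2 S : G -> Prop, finite_subgroup S &
    forall F : G -> Prop, finite_subgroup F ->
      exists n : nat, forall x, F x -> in_trajectory phi phiinv S n x.

(* chi is a character of G (continuous automatically, G discrete) *)
Definition is_character (R : realType) (G : zmodType) (chi : G -> R[i]) : Prop :=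
  (forall x, `|chi x| = 1) /\ (forall x y, chi (x + y) = chi x * chi y).

Definition triv_char (R : realType) (G : zmodType) : G -> R[i] := fun _ => 1.

(* U is a neighbourhood of the trivial character in the dual group, whose
   topology (compact-open = pointwise convergence since G is discrete) has
   basic neighbourhoods {chi | forall x in F, |chi x - 1| < eps} *)
Definition dual_nbhs_e (R : realType) (G : zmodType) (U : (G -> R[i]) -> Prop)
  : Prop :=
  exists (F : seq G) (eps : R), 0 < eps /\
    forall chi, is_character chi ->
      (forall x, x \in F -> `|chi x - 1| < (eps%:C)%C) -> U chi.

Definition dual_map (R : realType) (G : zmodType) (phi : G -> G)
  (chi : G -> R[i]) : G -> R[i] := fun x => chi (phi x).

Definition top_pos_expansive (R : realType) (G : zmodType) (phi : G -> G)
  : Prop :=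
  exists2 U : (G -> R[i]) -> Prop, dual_nbhs_e U &
    forall chi, is_character chi ->
      ((forall k : nat, U (iter k (dual_map phi) chi)) <-> chi = @triv_char R G).

Definition top_expansive (R : realType) (G : zmodType) (phi phiinv : G -> G)
  : Prop :=
  exists2 U : (G -> R[i]) -> Prop, dual_nbhs_e U &
    forall chi, is_character chi ->
      ((forall k : nat, U (iter k (dual_map phi) chi)
                     /\ U (iter k (dual_map phiinv) chi))
       <-> chi = @triv_char R G).

(** The pairing between G and its dual turns expansivity into an annihilator
   statement.  The circle has no small subgroups: a character whose values on a
   finite (hence torsion) subgroup S stay within distance 1 of 1 is trivial on
   S.  So the orbit of a character stays in the neighbourhood attached to S
   exactly when the character kills every phi^k S, i.e. the increasing union T
   of the trajectories sum_(k <= n) phi^k S.  Conversely every neighbourhood of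
   the trivial character contains the annihilator of some finite subgroup S.
   Since the circle is divisible, characters extend from subgroups to G (Zorn),
   so the characters separate points from subgroups: T = G exactly when only
   the trivial character kills T.  Finally, a finite subgroup F lies in T
   exactly when it lies in a single stage of T. *)

From mathcomp Require Import all_boot all_algebra complex reals.
From mathcomp Require Import order boolp classical_sets.
Local Open Scope classical_set_scope.
Local Open Scope ring_scope.
Import Order.TTheory GRing.Theory Num.Theory.

Set Implicit Arguments.
Unset Strict Implicit.
Unset Printing Implicit Defensive.

Lemma unity_root_near1_eq1 (C : numDomainType) (z : C) n : (0 < n)%N -> z ^+ n = 1 ->
  (forall m, `|z ^+ m - 1| < 1) -> z = 1.
Proof.
move=> n_gt0 zn1 near1; apply/eqP; apply: contraT => z_neq1; exfalso.
(* The z ^+ i - 1 (i < n) sum to -n, but each has norm < 1. *)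
have sum_pow : \sum_(i < n) z ^+ i = 0.
  by apply/eqP; move: (subrX1 z n); rewrite zn1 subrr => /esym/eqP;
    rewrite mulf_eq0 subr_eq0 (negbTE z_neq1).
have : `|\sum_(i < n) (z ^+ i - 1)| < n%:R.
  apply: le_lt_trans (ler_norm_sum _ _ _) _.
  rewrite -[n in n%:R]card_ord -sumr_const.
  apply: ltr_sum => [|i _]; last exact: near1.
  by apply/hasP; exists (Ordinal n_gt0); rewrite ?mem_index_enum.
by rewrite sumrB sum_pow sumr_const card_ord sub0r normrN normr_nat ltxx.
Qed.

Lemma exists_unity_root_neq1 (C : numClosedFieldType) d : (1 < d)%N ->
  exists2 w : C, w ^+ d = 1 & w != 1.
Proof.
move=> d_gt1; have d_gt0 := ltnW d_gt1.
have /closed_rootP [w /eqP sum_w] : size (\poly_(i < d) (1 : C)) != 1%N.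
  by rewrite size_poly_eq ?oner_eq0 // gtn_eqF.
rewrite horner_poly (eq_bigr _ (fun _ _ => mul1r _)) in sum_w.
exists w; first by apply/eqP; rewrite -subr_eq0 subrX1 sum_w mulr0.
apply: contra_eq_neq sum_w => ->; rewrite (eq_bigr _ (fun _ _ => expr1n _ _)).
by rewrite sumr_const card_ord pnatr_eq0 -lt0n.
Qed.

Section Subgroups.
Variable G : zmodType.
Hypothesis torG : torsion G.
Implicit Types (S T : set G).

Definition subgroup S := S 0 /\ forall a b, S a -> S b -> S (a - b).

Lemma subgroupN S a : subgroup S -> S a -> S (- a).
Proof. by case=> S0 subS Sa; rewrite -sub0r; apply: subS. Qed.

Lemma subgroupD S a b : subgroup S -> S a -> S b -> S (a + b).
Proof. by move=> grS Sa Sb; rewrite -[b]opprK; apply: grS.2 => //; apply: subgroupN. Qed.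

Lemma subgroupMn S a n : subgroup S -> S a -> S (a *+ n).
Proof.
move=> grS Sa; elim: n => [|n IH]; first by rewrite mulr0n; case: grS.
by rewrite mulrS; apply: subgroupD.
Qed.

Lemma finite_subgroupW S : finite_subgroup S -> subgroup S.
Proof. by case. Qed.

Lemma opp_mulrn_period (x : G) n j : x *+ n.+1 = 0 -> - (x *+ j) = x *+ (j * n).
Proof.
move=> xn0; apply/eqP; rewrite eq_sym -addr_eq0 -mulrnDr -mulnSr mulnC mulrnA xn0.
by rewrite mul0rn.
Qed.

Lemma finite_subgroup_cyclic (x : G) : finite_subgroup (range (fun i => x *+ i)).
Proof.
have [n n_gt0 xn0] := torG x; split; first by exists 0%N.
  move=> _ _ [i _ <-] [j _ <-]; exists (i + j * n.-1)%N => //.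
  by rewrite mulrnDr (opp_mulrn_period _ (_ : x *+ n.-1.+1 = 0)) ?prednK.
exists [seq x *+ i | i <- iota 0 n] => y; split; last by case/mapP=> i _ ->; exists i.
case=> i _ <-; rewrite (divn_eq i n) mulrnDr mulnC mulrnA xn0 mul0rn add0r.
by apply: map_f; rewrite mem_iota ltn_pmod.
Qed.

Lemma finite_subgroup_add S T : finite_subgroup S -> finite_subgroup T ->
  finite_subgroup [set a + b | a in S & b in T].
Proof.
move=> [S0 subS [s Ss]] [T0 subT [t Tt]]; split; first by exists 0 => //; exists 0; rewrite ?addr0.
  move=> _ _ [a1 Sa1 [b1 Tb1 <-]] [a2 Sa2 [b2 Tb2 <-]].
  by exists (a1 - a2); [exact: subS | exists (b1 - b2); [exact: subT | rewrite opprD addrACA]].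
exists [seq a + b | a <- s, b <- t] => x; split.
  by case=> a /Ss sa [b /Tt tb <-]; apply/allpairsP; exists (a, b).
by case/allpairsP=> -[a b] /= [/Ss Sa /Tt Tb ->]; exists a => //; exists b.
Qed.

Lemma finite_subgroup_seq (l : seq G) :
  exists2 S, finite_subgroup S & forall a, a \in l -> S a.
Proof.
elim: l => [|a l [S finS lS]].
  by exists (range (fun i => 0 *+ i)); [exact: finite_subgroup_cyclic |].
exists [set b + c | b in range (fun i => a *+ i) & c in S].
  by apply: finite_subgroup_add => //; exact: finite_subgroup_cyclic.
have [S0 _ _] := finS; move=> b; rewrite inE => /predU1P [->|/lS Sb].
  by exists a; [exists 1%N | exists 0; rewrite ?addr0].
by exists 0; [exists 0%N | exists b; rewrite ?add0r].
Qed.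

End Subgroups.

Section AdditiveMaps.
Variables (G : zmodType) (psi : G -> G).
Hypothesis psiD : {morph psi : x y / x + y}.

Lemma addmorph0 : psi 0 = 0.
Proof. by apply: (addIr (psi 0)); rewrite -psiD !add0r. Qed.

Lemma addmorphB : {morph psi : x y / x - y}.
Proof.
move=> x y; rewrite psiD; congr (_ + _); apply/eqP.
by rewrite -addr_eq0 -psiD addNr addmorph0.
Qed.

Lemma addmorph_iter k : {morph iter k psi : x y / x + y}.
Proof. by elim: k => [//|k IH] x y /=; rewrite IH psiD. Qed.

Lemma addmorph_can psi' : cancel psi psi' -> cancel psi' psi ->
  {morph psi' : x y / x + y}.
Proof. by move=> psiK psi'K x y; rewrite -{1}(psi'K x) -{1}(psi'K y) -psiD psiK. Qed.

End AdditiveMaps.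

Section PartialCharacters.
Variables (R : realType) (G : zmodType).
Local Notation C := R[i].
Implicit Types (E : set (G * C)) (a b y : G) (u v w : C).

(* A character of a subgroup of G, given by its graph: a subgroup of G * C with
   unimodular second coordinates meeting 0 * C only in (0, 1). *)
Definition partial_char E :=
  [/\ E (0, 1), (forall a u b v, E (a, u) -> E (b, v) -> E (a - b, u / v)),
      (forall a u, E (a, u) -> `|u| = 1) & (forall u, E (0, u) -> u = 1)].

Section Closure.
Variable E : set (G * C).
Hypothesis charE : partial_char E.

Lemma partial_char_neq0 a u : E (a, u) -> u != 0.
Proof. by case: charE => _ _ norm1 _ /norm1 u1; rewrite -normr_eq0 u1 oner_eq0. Qed.

Lemma partial_charN a u : E (a, u) -> E (- a, u^-1).
Proof. by case: charE => E01 sub _ _ /(sub _ _ _ _ E01); rewrite sub0r div1r. Qed.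

Lemma partial_charD a u b v : E (a, u) -> E (b, v) -> E (a + b, u * v).
Proof.
case: charE => _ sub _ _ Eau /partial_charN Ebv.
by rewrite -[b]opprK -[v]invrK; apply: sub.
Qed.

Lemma partial_char_fun a u v : E (a, u) -> E (a, v) -> u = v.
Proof.
case: charE => _ sub _ E0 Eau Eav; have := sub _ _ _ _ Eau Eav.
by rewrite subrr => /E0 /divr1_eq.
Qed.

Lemma partial_charMn a u n : E (a, u) -> E (a *+ n, u ^+ n).
Proof.
case: charE => E01 _ _ _ Eau; elim: n => [|n IH]; first by rewrite mulr0n expr0.
by rewrite mulrS exprS; apply: partial_charD.
Qed.

Lemma partial_charMz a u (m : int) : E (a, u) -> E (a *~ m, u ^ m).
Proof.
by case: m => n Eau; [apply: partial_charMn | apply/partial_charN/partial_charMn].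
Qed.

End Closure.

Lemma partial_char_directed E : E (0, 1) ->
  (forall p q, E p -> E q -> exists E', [/\ partial_char E', E' `<=` E, E' p & E' q]) ->
  partial_char E.
Proof.
move=> E01 directed; split=> // [a u b v Eau Ebv|a u Eau|u E0u].
- have [E' [[_ sub _ _] /(_ (a - b, u / v)) + E'au E'bv]] := directed _ _ Eau Ebv.
  by apply; apply: sub.
- by have [E' [[_ _ norm1 _] _ /norm1 + _]] := directed _ _ Eau Eau.
- by have [E' [[_ _ _ E0] _ /E0 + _]] := directed _ _ E0u E0u.
Qed.

Definition adjoin E y w : set (G * C) :=
  [set p | exists h u (m : int), E (h, u) /\ p = (h + y *~ m, u * w ^ m)].

(* The condition for y |-> w to extend E to a character on dom E + Z y. *)
Definition compatible E y w := forall (m : int) u, E (y *~ m, u) -> u = w ^ m.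

Lemma norm_exprz1 w (m : int) : `|w| = 1 -> `|w ^ m| = 1.
Proof. by case: m => n w1; rewrite ?normfV normrX w1 expr1n ?invr1. Qed.

Lemma partial_char_adjoin E y w : partial_char E -> `|w| = 1 -> compatible E y w ->
  [/\ partial_char (adjoin E y w), E `<=` adjoin E y w & adjoin E y w (y, w)].
Proof.
move=> charE w1 compat; have w_neq0 : w != 0 by rewrite -normr_eq0 w1 oner_eq0.
have [E01 sub norm1 _] := charE.
split; last 2 first.
- by case=> a u Eau; exists a, u, 0; rewrite mulr0z addr0 expr0z mulr1.
- by exists 0, 1, 1; rewrite add0r mul1r.
split.
- by exists 0, 1, 0; rewrite mulr0z addr0 expr0z mulr1.
- move=> _ _ _ _ [h1 [u1 [m1 [Ehu1 [-> ->]]]]] [h2 [u2 [m2 [Ehu2 [-> ->]]]]].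
  exists (h1 - h2), (u1 / u2), (m1 - m2); split; first exact: sub.
  by rewrite mulrzBr opprD addrACA expfzDr // -invr_expz invfM mulrACA.
- move=> a v [h [u [m [Ehu [_ ->]]]]].
  by rewrite normrM (norm1 _ _ Ehu) norm_exprz1 ?mul1r.
- move=> v [h [u [m [Ehu [hm0 ->]]]]].
  have ym : y *~ m = - h by apply/eqP; rewrite -addr_eq0 addrC -hm0.
  have : E (y *~ m, u^-1) by rewrite ym; exact: partial_charN.
  by move/compat <-; rewrite divff // (partial_char_neq0 charE Ehu).
Qed.

Lemma partial_char_roots_compatible E y : torsion G -> partial_char E ->
  exists d c, [/\ (0 < d)%N, E (y *+ d, c) &
    forall w, w ^+ d = c -> `|w| = 1 /\ compatible E y w].
Proof.
move=> torG charE; have [E01 sub norm1 _] := charE.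
have has_mult : exists k, (0 < k)%N && `[< exists u, E (y *+ k, u) >].
  have [n n_gt0 yn0] := torG y; exists n; rewrite n_gt0.
  by apply/asboolP; exists 1; rewrite yn0.
(* d is the order of y modulo dom E, so y *~ m in dom E forces d %| m. *)
have [d /andP [d_gt0 /asboolP [c Eydc]] d_min] := ex_minnP has_mult.
exists d, c; split=> // w wdc; split.
  by apply/eqP; rewrite -(pexpr_eq1 d_gt0) // -normrX wdc (norm1 _ _ Eydc).
move=> m u Eymu; set q := (m %/ d)%Z; set r := (m %% d)%Z.
have m_eq : m = q * d + r := divz_eq m d.
have Eyqd : E (y *~ (q * d), c ^ q).
  by rewrite mulrC mulrzA -pmulrn; apply: partial_charMz.
have r0 : r = 0.
  have Eyr : E (y *~ r, u / c ^ q).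
    have -> : r = m - q * d by rewrite m_eq addrAC subrr add0r.
    by rewrite mulrzBr; apply: sub.
  have r_ge0 : 0 <= r by apply: modz_ge0; rewrite eqz_nat -lt0n.
  have r_ltd : r < d%:Z by apply: ltz_pmod; rewrite ltz_nat.
  have [k rk] : exists k : nat, r = k by exists `|r|%N; rewrite gez0_abs.
  rewrite rk -pmulrn in Eyr r_ltd *; apply/eqP; rewrite eqz_nat.
  apply: contraT; rewrite -lt0n => k_gt0.
  have := d_min k; rewrite k_gt0 leqNgt -ltz_nat r_ltd /=; apply.
  by apply/asboolP; exists (u / c ^ q).
have m_qd : m = q * d by rewrite m_eq r0 addr0.
rewrite m_qd in Eymu *; rewrite (partial_char_fun charE Eymu Eyqd).
by rewrite mulrC -exprz_exp -wdc.
Qed.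

Lemma partial_char_chain E0 (F : set (set (G * C))) : partial_char E0 ->
  (forall X, F X -> partial_char (E0 `|` X)) -> total_on F subset ->
  partial_char (E0 `|` \bigcup_(X in F) X).
Proof.
move=> charE0 charF chainF; apply: partial_char_directed; first by left; case: charE0.
suff common p q : (E0 `|` \bigcup_(X in F) X) p -> (E0 `|` \bigcup_(X in F) X) q ->
    exists Y, [/\ Y = set0 \/ F Y, (E0 `|` Y) p & (E0 `|` Y) q].
  move=> p q /common /[apply] -[Y [FY Yp Yq]]; exists (E0 `|` Y); split=> //.
    by case: FY => [->|/charF //]; rewrite setU0.
  by apply: setUS; case: FY => [->|FY]; [exact: sub0set | exact: bigcup_sup].
case=> [E0p|[X FX Xp]] [E0q|[X' FX' X'q]].
- by exists set0; split; [left | left | left].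
- by exists X'; split; [right | left | right].
- by exists X; split; [right | right | left].
- have [XX'|X'X] := chainF _ _ FX FX'.
    by exists X'; split; [right | right; apply: XX' | right].
  by exists X; split; [right | right | right; apply: X'X].
Qed.

Lemma is_character_graph E chi : partial_char E -> (forall a, E (a, chi a)) ->
  is_character chi.
Proof.
move=> charE graph; split=> [a|a b]; first by case: charE => _ _ norm1 _; apply: norm1 (graph a).
by apply: (partial_char_fun charE (graph (a + b))); apply: partial_charD.
Qed.

Lemma partial_char_extend E0 : torsion G -> partial_char E0 ->
  exists chi, is_character chi /\ forall a u, E0 (a, u) -> chi a = u.
Proof.
move=> torG charE0.
(* Zorn runs over the A with E0 `|` A a partial character, so that the empty
   chain has an upper bound too. *)
have [A [charA maxA]] :=
  Zorn_bigcup (fun F FP chainF => partial_char_chain charE0 FP chainF).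
set E := E0 `|` A.
have total y : exists u, E (y, u).
  apply: contrapT => no_u.
  have [d [c [d_gt0 _ root_compat]]] := partial_char_roots_compatible y torG charA.
  have [w1 compat] := root_compat _ (rootCK d_gt0 c).
  have [charE' sub_E' E'y] := partial_char_adjoin charA w1 compat.
  apply: (maxA (adjoin E y (d.-root c))).
    split; first by move=> p Ap; apply: sub_E'; right.
    by move=> /(_ _ E'y) Ay; apply: no_u; exists (d.-root c); right.
  by rewrite /= setUidr // => p E0p; apply: sub_E'; left.
have [chi chiE] := choice total.
exists chi; split; first exact: is_character_graph charA chiE.
by move=> a u E0au; apply: (partial_char_fun charA (chiE a)); left.
Qed.

Lemma char_separates T x : torsion G -> subgroup T -> ~ T x ->
  exists chi : G -> C, [/\ is_character chi, forall a, T a -> chi a = 1 & chi x != 1].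
Proof.
move=> torG [T0 subT] Tx.
pose E0 := [set p : G * C | T p.1 /\ p.2 = 1].
have charE0 : partial_char E0.
  rewrite /E0; split=> [|a u b v /= [Ta ->] [Tb ->]|a u /= [_ ->]|u /= [_ ->]] //.
  - by split; [apply: subT | rewrite divr1].
  - by rewrite normr1.
have [d [c [d_gt0 [Txd c1] root_compat]]] := partial_char_roots_compatible x torG charE0.
rewrite /= in Txd c1.
have d_gt1 : (1 < d)%N.
  rewrite ltn_neqAle d_gt0 andbT; apply: contra_notN Tx => /eqP d1.
  by rewrite -d1 mulr1n in Txd.
have [w wd1 w_neq1] := @exists_unity_root_neq1 C d d_gt1.
have [w1 compat] : `|w| = 1 /\ compatible E0 x w by apply: root_compat; rewrite wd1 c1.
have [charE sub_E Exw] := partial_char_adjoin charE0 w1 compat.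
have [chi [chi_char chiE]] := partial_char_extend torG charE.
exists chi; split=> // [a Ta|]; first by apply: chiE; apply: sub_E.
by rewrite (chiE _ _ Exw).
Qed.

End PartialCharacters.

Section Characters.
Variables (R : realType) (G : zmodType).
Local Notation C := R[i].
Hypothesis torG : torsion G.
Implicit Types (chi : G -> C) (psi phi : G -> G) (S : set G).

Lemma char0 chi : is_character chi -> chi 0 = 1.
Proof.
move=> [norm1 chiD]; have chi0_neq0 : chi 0 != 0 by rewrite -normr_eq0 norm1 oner_eq0.
by apply: (mulfI chi0_neq0); rewrite mulr1 -chiD addr0.
Qed.

Lemma charMn chi a n : is_character chi -> chi (a *+ n) = chi a ^+ n.
Proof.
move=> chi_char; elim: n => [|n IH]; first by rewrite mulr0n expr0 char0.
by case: chi_char => _ chiD; rewrite mulrS exprS chiD IH.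
Qed.

Lemma char_comp chi psi : is_character chi -> {morph psi : x y / x + y} ->
  is_character (chi \o psi).
Proof. by move=> [norm1 chiD] psiD; split=> [x |x y] /=; rewrite ?psiD. Qed.

Lemma iter_dual_map phi k chi : iter k (dual_map phi) chi = chi \o iter k phi.
Proof.
elim: k => [//|k IH]; rewrite iterS IH; apply: funext => x.
by rewrite /dual_map /= -iterSr.
Qed.

Lemma char_near1_trivial chi S : is_character chi -> subgroup S ->
  (forall x, S x -> `|chi x - 1| < 1) -> forall x, S x -> chi x = 1.
Proof.
move=> chi_char grS near1 x Sx; have [n n_gt0 xn0] := torG x.
apply: (unity_root_near1_eq1 n_gt0); first by rewrite -charMn // xn0 char0.
by move=> m; rewrite -charMn //; apply: near1; apply: subgroupMn.
Qed.

End Characters.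

Section PosTrajectory.
Variables (G : zmodType) (phi : G -> G) (S : set G).
Hypotheses (phiD : {morph phi : x y / x + y}) (grS : subgroup S).
Local Notation Tr := (in_pos_trajectory phi S).

Lemma iter_addmorph0 k : iter k phi 0 = 0.
Proof. exact/addmorph0/addmorph_iter. Qed.

Lemma in_pos_trajectory0 n : Tr n 0.
Proof.
exists (fun _ => 0); split=> [k _|]; first by case: grS.
by rewrite big1 // => k _; rewrite iter_addmorph0.
Qed.

Lemma in_pos_trajectory_iter k a : S a -> Tr k (iter k phi a).
Proof.
move=> Sa; exists (fun j => if j == k then a else 0); split=> [j _|].
  by case: eqP => // _; case: grS.
rewrite big_ord_recr /= eqxx big1 ?add0r // => j _.
by rewrite (ltn_eqF (ltn_ord j)) iter_addmorph0.
Qed.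

Lemma in_pos_trajectory_mono n N x : (n <= N)%N -> Tr n x -> Tr N x.
Proof.
move=> le_nN [s [Ss ->]]; exists (fun k => if (k <= n)%N then s k else 0); split=> [k _|].
  by case: ifP => [/Ss //|_]; case: grS.
rewrite (big_ord_widen N.+1 (fun k => iter k phi (s k))) // big_mkcond.
by apply: eq_bigr => k _ /=; rewrite ltnS; case: ifP => // _; rewrite iter_addmorph0.
Qed.

Lemma in_pos_trajectoryB n x y : Tr n x -> Tr n y -> Tr n (x - y).
Proof.
move=> [s [Ss ->]] [t [St ->]]; exists (fun k => s k - t k); split=> [k kn|].
  by apply: grS.2; [apply: Ss | apply: St].
by rewrite -sumrB; apply: eq_bigr => k _; rewrite (addmorphB (addmorph_iter phiD k)).
Qed.

End PosTrajectory.

Lemma char_in_pos_trajectory (R : realType) (G : zmodType) (phi : G -> G) S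
    (chi : G -> R[i]) n x :
  is_character chi -> (forall k a, S a -> chi (iter k phi a) = 1) ->
  in_pos_trajectory phi S n x -> chi x = 1.
Proof.
move=> chi_char chi1 [s [Ss ->]]; have [_ chiD] := chi_char.
rewrite (big_morph chi chiD (char0 chi_char)) big1 // => k _.
by apply/chi1/Ss; rewrite -ltnS.
Qed.

Section Trajectory.
Variables (G : zmodType) (phi phiinv : G -> G) (S : set G).
Hypotheses (phiD : {morph phi : x y / x + y}) (phiinvD : {morph phiinv : x y / x + y}).
Hypothesis grS : subgroup S.
Local Notation Tr := (in_trajectory phi phiinv S).

Lemma in_trajectoryP n x : Tr n x <-> exists y z,
  [/\ in_pos_trajectory phi S n y, in_pos_trajectory phiinv S n z & x = y + z].
Proof.
(* The k = 0 term of the backward sum is absorbed into the forward one. *)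
have split0 (F : nat -> G) : \sum_(k < n.+1) F k = F 0%N + \sum_(1 <= k < n.+1) F k.
  by rewrite -(big_mkord xpredT) big_ltn.
split.
  move=> [s [t [St ->]]]; exists (\sum_(k < n.+1) iter k phi (s k)).
  exists (\sum_(1 <= k < n.+1) iter k phiinv (t k)); split=> //.
    by exists s; split=> // k /St [].
  exists (fun k => if k == 0%N then 0 else t k); split=> [k /St [_ Stk]|].
    by case: eqP => // _; case: grS.
  rewrite (split0 (fun k => iter k phiinv (if k == 0%N then 0 else t k))) /= add0r.
  by apply: eq_big_nat => k /andP [k_gt0 _]; rewrite gtn_eqF.
move=> [_ [_ [[s [Ss ->]] [t [St ->]] ->]]].
exists (fun k => if k == 0%N then s 0%N + t 0%N else s k), t; split.
  move=> k kn; split; last exact: St.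
  by case: eqP => [_|_]; [apply: subgroupD; [|apply: Ss|apply: St] | apply: Ss].
rewrite (split0 (fun k => iter k phi (s k))) (split0 (fun k => iter k phiinv (t k))).
rewrite (split0 (fun k => iter k phi (if k == 0%N then s 0%N + t 0%N else s k))) /=.
rewrite [LHS]addrACA -[RHS]addrA; congr (_ + (_ + _)).
by apply: eq_big_nat => k /andP [k_gt0 _]; rewrite gtn_eqF.
Qed.

Lemma in_trajectory0 n : Tr n 0.
Proof.
by apply/in_trajectoryP; exists 0, 0; rewrite addr0; split=> //; apply: in_pos_trajectory0.
Qed.

Lemma in_trajectory_mono n N x : (n <= N)%N -> Tr n x -> Tr N x.
Proof.
move=> le_nN /in_trajectoryP [y [z [Ty Tz ->]]]; apply/in_trajectoryP; exists y, z.
by split=> //; apply: in_pos_trajectory_mono le_nN _.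
Qed.

Lemma in_trajectoryB n x y : Tr n x -> Tr n y -> Tr n (x - y).
Proof.
move=> /in_trajectoryP [x1 [x2 [Tx1 Tx2 ->]]] /in_trajectoryP [y1 [y2 [Ty1 Ty2 ->]]].
apply/in_trajectoryP; exists (x1 - y1), (x2 - y2); rewrite opprD addrACA.
by split=> //; apply: in_pos_trajectoryB.
Qed.

Lemma in_trajectory_iter k a : S a -> Tr k (iter k phi a) /\ Tr k (iter k phiinv a).
Proof.
move=> Sa; split; apply/in_trajectoryP.
  by exists (iter k phi a), 0; rewrite addr0; split;
    [apply: in_pos_trajectory_iter | apply: in_pos_trajectory0 |].
by exists 0, (iter k phiinv a); rewrite add0r; split;
  [apply: in_pos_trajectory0 | apply: in_pos_trajectory_iter |].
Qed.

Lemma char_in_trajectory (R : realType) (chi : G -> R[i]) n x : is_character chi ->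
  (forall k a, S a -> chi (iter k phi a) = 1) ->
  (forall k a, S a -> chi (iter k phiinv a) = 1) ->
  Tr n x -> chi x = 1.
Proof.
move=> chi_char chi1 chi1' /in_trajectoryP [y [z [Ty Tz ->]]]; have [_ ->] := chi_char.
rewrite (char_in_pos_trajectory chi_char chi1 Ty).
by rewrite (char_in_pos_trajectory chi_char chi1' Tz) mulr1.
Qed.

End Trajectory.

Section Covers.
Variables (R : realType) (G : zmodType).
Local Notation C := R[i].
Hypothesis torG : torsion G.
Implicit Types (Tr : nat -> set G) (chi : G -> C).

Definition covers Tr :=
  forall F, finite_subgroup F -> exists n, forall x, F x -> Tr n x.

Lemma covers_char_trivial Tr chi : covers Tr -> is_character chi ->
  (forall n x, Tr n x -> chi x = 1) -> chi = @triv_char R G.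
Proof.
move=> covTr chi_char chi1; apply: funext => x.
have [n Fn] := covTr _ (finite_subgroup_cyclic torG x).
by apply: (chi1 n); apply: Fn; exists 1%N; rewrite ?mulr1n.
Qed.

Lemma covers_of_char_trivial Tr :
  (forall n N x, (n <= N)%N -> Tr n x -> Tr N x) -> Tr 0%N 0 ->
  (forall n x y, Tr n x -> Tr n y -> Tr n (x - y)) ->
  (forall chi, is_character chi ->
    (forall n x, Tr n x -> chi x = 1) -> chi = @triv_char R G) ->
  covers Tr.
Proof.
move=> mono Tr00 TrB trivial.
have cover_all x : exists n, Tr n x.
  apply: contrapT => no_n.
  have grT : subgroup (fun x => exists n, Tr n x).
    split=> [|a b [n Tna] [m Tmb]]; first by exists 0%N.
    exists (maxn n m); apply: TrB.
      exact: mono (leq_maxl n m) Tna.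
    exact: mono (leq_maxr n m) Tmb.
  have [chi [chi_char chiT]] := char_separates R torG grT no_n.
  rewrite (trivial chi chi_char) ?eqxx // => n a Tna.
  by apply: chiT; exists n.
move=> F [_ _ [f Ff]].
have [N fN] : exists N, forall x, x \in f -> Tr N x.
  elim: f {Ff} => [|a f [N fN]]; first by exists 0%N.
  have [n Tna] := cover_all a; exists (maxn n N) => x; rewrite inE => /predU1P [->|/fN].
    exact: mono (leq_maxl n N) Tna.
  exact: mono (leq_maxr n N).
by exists N => x /Ff /fN.
Qed.

End Covers.

Section Neighbourhoods.
Variables (R : realType) (G : zmodType).
Local Notation C := R[i].
Hypothesis torG : torsion G.
Implicit Types (chi : G -> C).

Definition near1 (s : seq G) : set (G -> C) :=
  [set chi | forall x, x \in s -> `|chi x - 1| < 1].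

Lemma dual_nbhs_near1 s : dual_nbhs_e (near1 s).
Proof. by exists s, 1; split=> [|chi _]; [exact: ltr01 | apply]. Qed.

Lemma near1_triv s : near1 s (@triv_char R G).
Proof. by move=> x _; rewrite subrr normr0 ltr01. Qed.

Lemma near1_iter_dual_trivial phi S s chi k : {morph phi : x y / x + y} ->
  subgroup S -> (forall x, S x <-> x \in s) -> is_character chi ->
  near1 s (iter k (dual_map phi) chi) -> forall a, S a -> chi (iter k phi a) = 1.
Proof.
move=> phiD grS Ss chi_char; rewrite iter_dual_map => near1_k.
apply: (char_near1_trivial torG (char_comp chi_char (addmorph_iter phiD k)) grS).
by move=> a /Ss; apply: near1_k.
Qed.

Lemma dual_nbhs_char_trivial U : dual_nbhs_e U -> exists F0 : seq G,
  forall chi, is_character chi -> (forall x, x \in F0 -> chi x = 1) -> U chi.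
Proof.
move=> [F0 [eps [eps_gt0 UF0]]]; exists F0 => chi chi_char chi1.
by apply: UF0 => // x /chi1 ->; rewrite subrr normr0 (ltcR 0).
Qed.

End Neighbourhoods.

Section Expansivity.
Variables (R : realType) (G : zmodType) (phi : G -> G).
Hypotheses (torG : torsion G) (phiD : {morph phi : x y / x + y}).

Lemma top_pos_expansive_of_alg : alg_pos_expansive phi -> top_pos_expansive R phi.
Proof.
move=> [S finS covS]; have [_ _ [s Ss]] := finS.
exists (near1 s); first exact: dual_nbhs_near1.
move=> chi chi_char; split=> [near1_iter|->]; last first.
  by move=> k; rewrite iter_dual_map; apply: near1_triv.
apply: (covers_char_trivial torG covS chi_char) => n x.
apply: (char_in_pos_trajectory chi_char) => k.
exact: (near1_iter_dual_trivial torG phiD (finite_subgroupW finS) Ss chi_char (near1_iter k)).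
Qed.

Lemma alg_pos_expansive_of_top : top_pos_expansive R phi -> alg_pos_expansive phi.
Proof.
move=> [U /dual_nbhs_char_trivial [F0 UF0] expU].
have [S finS F0S] := finite_subgroup_seq torG F0; have grS := finite_subgroupW finS.
exists S => //; apply: (covers_of_char_trivial torG) => //.
- by move=> n N x; apply: in_pos_trajectory_mono.
- exact: in_pos_trajectory0.
- by move=> n x y; apply: in_pos_trajectoryB.
move=> chi chi_char chi1; apply/expU => // k; rewrite iter_dual_map.
apply: UF0 => [|a /F0S Sa]; first exact: char_comp chi_char (addmorph_iter phiD k).
exact: chi1 (in_pos_trajectory_iter phiD grS k Sa).
Qed.

Variable phiinv : G -> G.
Hypothesis phiinvD : {morph phiinv : x y / x + y}.

Lemma top_expansive_of_alg : alg_expansive phi phiinv -> top_expansive R phi phiinv.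
Proof.
move=> [S finS covS]; have [_ _ [s Ss]] := finS; have grS := finite_subgroupW finS.
exists (near1 s); first exact: dual_nbhs_near1.
move=> chi chi_char; split=> [near1_iter|->]; last first.
  by move=> k; rewrite !iter_dual_map; split; apply: near1_triv.
apply: (covers_char_trivial torG covS chi_char) => n x.
apply: (char_in_trajectory grS chi_char) => k; have [near1_k near1_k'] := near1_iter k.
  exact: (near1_iter_dual_trivial torG phiD grS Ss chi_char near1_k).
exact: (near1_iter_dual_trivial torG phiinvD grS Ss chi_char near1_k').
Qed.

Lemma alg_expansive_of_top : top_expansive R phi phiinv -> alg_expansive phi phiinv.
Proof.
move=> [U /dual_nbhs_char_trivial [F0 UF0] expU].
have [S finS F0S] := finite_subgroup_seq torG F0; have grS := finite_subgroupW finS.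
exists S => //; apply: (covers_of_char_trivial torG) => //.
- by move=> n N x; apply: in_trajectory_mono.
- exact: in_trajectory0.
- by move=> n x y; apply: in_trajectoryB.
move=> chi chi_char chi1; apply/expU => // k; rewrite !iter_dual_map.
have trivial_iter a : a \in F0 -> chi (iter k phi a) = 1 /\ chi (iter k phiinv a) = 1.
  by move=> /F0S /(in_trajectory_iter phiD phiinvD grS k) [/chi1 -> /chi1 ->].
split; apply: UF0 => [|a /trivial_iter [] //];
  exact: char_comp chi_char (addmorph_iter _ k).
Qed.

End Expansivity.

Theorem theorem5p1 (R : realType) (G : zmodType) (phi : G -> G)
  (hG : torsion G) (hphi : forall x y : G, phi (x + y) = phi x + phi y) :
  (alg_pos_expansive phi <-> top_pos_expansive R phi) /\
  (forall phiinv : G -> G, cancel phi phiinv -> cancel phiinv phi ->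
     (alg_expansive phi phiinv <-> top_expansive R phi phiinv)).
Proof.
split; first by split; [apply: top_pos_expansive_of_alg | apply: alg_pos_expansive_of_top].
move=> phiinv phiK phiinvK; have phiinvD := addmorph_can hphi phiK phiinvK.
by split; [apply: top_expansive_of_alg | apply: alg_expansive_of_top].
Qed.
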